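(* Let $\mathbb{L}^2$ be as described in the context. Every non-constant geodesic of $\mathbb{L}^2$ has, modulo reparametrization, one of the following forms, for some $\alpha,\beta\in\mathbb{R}$, $c>0$ and choice of sign $\pm$: (1) $\sigma(t)=(e^t,\alpha)$ for $-\infty<t<\infty$; this geodesic is complete. (2) $\sigma(t)=(t^{-1},\pm t^{-1}+\alpha)$ for $0<t<\infty$; this geodesic is incomplete at one end and complete at the other end. (3) $\sigma(t)=\left(\frac{1}{c\sinh(t)},\pm\frac{\coth(t)}{c}+\beta\right)$ for $t\in(0,\infty)$. This tends asymptotically to the line $x^1=0$ as $t\to\infty$ and escapes to the right ($x^1\to\infty$) as $t\to0$. These geodesics are incomplete at one end and complete at the other; they all have infinite (and negative) length. (4) $\sigma(t)=\left(\frac{1}{c\sin(t)},\pm\frac{\cot(t)}{c}+\beta\right)$ for $t\in(0,\pi)$. These escape upwards and to the right as $t\to0$ and downwards and to the right as $t\to\pi$; such a geodesic is incomplete at both ends and has total length $\pi$. (5) The geodesics in (3) and (4) solve an equation of the form $(x^1)^2-\frac{\lambda}{c^2}=(x^2+\beta)^2$ (for suitable $\beta\in\mathbb{R}$) and are hyperbolas; here $\lambda=+1$ for the ''vertical'' geodesics of (4), $\lambda=-1$ for the ''horizontal'' geodesics of (3), while $\lambda=0$ corresponds to the null geodesics.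
   Context: $\mathbb{L}^2$ is $\mathbb{R}^+\times\mathbb{R}=\{(x^1,x^2):x^1>0\}$ with the torsion free connection whose nonzero Christoffel symbols (with $\nabla_{\partial_{x^i}}\partial_{x^j}=\Gamma_{ij}{}^k\partial_{x^k}$) are $\Gamma_{11}{}^1=-\frac1{x^1}$, $\Gamma_{12}{}^2=\Gamma_{21}{}^2=-\frac1{x^1}$, $\Gamma_{22}{}^1=-\frac1{x^1}$. This is the Levi--Civita connection of the Lorentzian metric $g=(x^1)^{-2}\operatorname{diag}(-1,1)$ (its symmetric Ricci tensor), and lengths are measured with respect to $g$. A geodesic is complete at an end if it is defined for all parameter values in that direction. *)

From Stdlib Require Import Reals.
From Coquelicot Require Import Coquelicot.
Open Scope R_scope.

Inductive idx := i1 | i2.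

(* Christoffel symbols Gamma_{ij}^k at a point with first coordinate x1
   (they do not depend on x2). *)
Definition Gamma (i j k : idx) (x1 : R) : R :=
  match i, j, k with
  | i1, i1, i1 => - / x1
  | i1, i2, i2 => - / x1
  | i2, i1, i2 => - / x1
  | i2, i2, i1 => - / x1
  | _, _, _ => 0
  end.

Definition coord (x1 x2 : R -> R) (i : idx) : R -> R :=
  match i with i1 => x1 | i2 => x2 end.

Definition in_dom (a b : Rbar) (t : R) : Prop := Rbar_lt a t /\ Rbar_lt t b.

Definition geodesic (a b : Rbar) (x1 x2 : R -> R) : Prop :=
  forall t, in_dom a b t ->
    0 < x1 t /\
    (forall i, ex_derive (coord x1 x2 i) t /\
               ex_derive (Derive (coord x1 x2 i)) t) /\
    (forall k,
       Derive (Derive (coord x1 x2 k)) t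
       + (Gamma i1 i1 k (x1 t) * Derive x1 t * Derive x1 t
        + Gamma i1 i2 k (x1 t) * Derive x1 t * Derive x2 t
        + Gamma i2 i1 k (x1 t) * Derive x2 t * Derive x1 t
        + Gamma i2 i2 k (x1 t) * Derive x2 t * Derive x2 t) = 0).

Definition nonconstant (a b : Rbar) (x1 x2 : R -> R) : Prop :=
  exists s t, in_dom a b s /\ in_dom a b t /\ (x1 s, x2 s) <> (x1 t, x2 t).

Definition reparam_of (a b : Rbar) (x1 x2 : R -> R)
                      (A B : Rbar) (y1 y2 : R -> R) : Prop :=
  exists p q : R, p <> 0 /\
    forall s, in_dom a b s ->
      in_dom A B (p * s + q) /\ x1 s = y1 (p * s + q) /\ x2 s = y2 (p * s + q).

Definition complete_right (a b : Rbar) (x1 x2 : R -> R) : Prop :=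
  exists y1 y2, geodesic a p_infty y1 y2 /\
    forall t, in_dom a b t -> y1 t = x1 t /\ y2 t = x2 t.
Definition complete_left (a b : Rbar) (x1 x2 : R -> R) : Prop :=
  exists y1 y2, geodesic m_infty b y1 y2 /\
    forall t, in_dom a b t -> y1 t = x1 t /\ y2 t = x2 t.

Definition sig1_1 (t : R) : R := exp t.
Definition sig1_2 (al : R) (t : R) : R := al.
Definition sig2_1 (t : R) : R := / t.
Definition sig2_2 (e al : R) (t : R) : R := e * / t + al.
Definition sig3_1 (c : R) (t : R) : R := / (c * sinh t).
Definition sig3_2 (c e be : R) (t : R) : R := e * (cosh t / sinh t) / c + be.
Definition sig4_1 (c : R) (t : R) : R := / (c * sin t).
Definition sig4_2 (c e be : R) (t : R) : R := e * (cos t / sin t) / c + be.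

Definition Rbar_at_left (b : Rbar) : (R -> Prop) -> Prop :=
  match b with Finite r => at_left r | _ => Rbar_locally b end.
Definition Rbar_at_right (a : Rbar) : (R -> Prop) -> Prop :=
  match a with Finite r => at_right r | _ => Rbar_locally a end.

(* g(sigma', sigma') for g = (x1)^-2 diag(-1,1). *)
Definition gnorm (x1 x2 : R -> R) (t : R) : R :=
  (- (Derive x1 t) ^ 2 + (Derive x2 t) ^ 2) / (x1 t) ^ 2.
Definition sgn (r : R) : R :=
  if Rlt_dec 0 r then 1 else if Rlt_dec r 0 then -1 else 0.
Definition len_density (x1 x2 : R -> R) (t : R) : R :=
  sgn (gnorm x1 x2 t) * sqrt (Rabs (gnorm x1 x2 t)).

Definition total_length (a b : Rbar) (x1 x2 : R -> R) (L : Rbar) : Prop :=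
  exists t0, in_dom a b t0 /\ exists L1 L2 : Rbar,
    filterlim (fun u => RInt (len_density x1 x2) u t0) (Rbar_at_right a)
              (Rbar_locally L1) /\
    filterlim (fun v => RInt (len_density x1 x2) t0 v) (Rbar_at_left b)
              (Rbar_locally L2) /\
    is_Rbar_plus L1 L2 L.

From Stdlib Require Import Reals Lra.
From Coquelicot Require Import Coquelicot.
Open Scope R_scope.

(* The metric does not depend on x2, so K = x2'/(x1)^2 is conserved, and so is
   E = g(s',s').  In the coordinate u = 1/x1 the geodesic equations become
   u'' = -E u with first integral u'^2 + E u^2 = K^2, together with
   x2' = K/u^2.  Hence, up to an affine change of parameter, u is an
   exponential (K = 0), affine (E = 0), c sinh (E < 0) or c sin (E > 0)
   function, x2 is obtained by integrating K/u^2, and positivity of u confines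
   the parameter to the stated interval.  Conversely each model solves these
   equations with constant g(s',s') = E, which gives the lengths, and
   x2 + u'/(K u) is constant, which gives the hyperbolas. *)

Lemma in_dom_between a b s u t :
  in_dom a b s -> in_dom a b u -> Rmin s u <= t <= Rmax s u -> in_dom a b t.
Proof.
  intros [Has Hsb] [Hau Hub] [Hmin Hmax]; split.
  - destruct (Rle_dec s u).
    + apply Rbar_lt_le_trans with s; [exact Has|]. rewrite Rmin_left in Hmin by lra. exact Hmin.
    + apply Rbar_lt_le_trans with u; [exact Hau|]. rewrite Rmin_right in Hmin by lra. exact Hmin.
  - destruct (Rle_dec s u).
    + apply Rbar_le_lt_trans with u; [|exact Hub]. rewrite Rmax_right in Hmax by lra. exact Hmax.
    + apply Rbar_le_lt_trans with s; [|exact Hsb]. rewrite Rmax_left in Hmax by lra. exact Hmax.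
Qed.

Lemma in_dom_locally a b t : in_dom a b t -> locally t (in_dom a b).
Proof.
  intros [Ha Hb]. exact (filter_and _ _ (open_Rbar_gt' t a Ha) (open_Rbar_lt' t b Hb)).
Qed.

Lemma in_dom_at_right a b : Rbar_lt a b -> Rbar_at_right a (in_dom a b).
Proof.
  destruct a as [a| |]; intros Hab; cbn [Rbar_at_right]; [| contradiction |].
  - unfold at_right, within.
    apply (filter_imp (fun t : R => Rbar_lt t b)); [|exact (open_Rbar_lt' a b Hab)].
    intros t Htb Hat. split; [exact Hat | exact Htb].
  - apply (filter_imp (fun t : R => Rbar_lt t b)); [|exact (open_Rbar_lt' m_infty b Hab)].
    intros t Htb. split; [exact I | exact Htb].
Qed.

Lemma in_dom_at_left a b : Rbar_lt a b -> Rbar_at_left b (in_dom a b).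
Proof.
  destruct b as [b| |]; intros Hab; cbn [Rbar_at_left]; [| | destruct a; contradiction].
  - unfold at_left, within.
    apply (filter_imp (fun t : R => Rbar_lt a t)); [|exact (open_Rbar_gt' b a Hab)].
    intros t Hat Htb. split; [exact Hat | exact Htb].
  - apply (filter_imp (fun t : R => Rbar_lt a t)); [|exact (open_Rbar_gt' p_infty a Hab)].
    intros t Hat. split; [exact Hat | exact I].
Qed.

Lemma is_derive_0_const a b (f : R -> R) :
  (forall t, in_dom a b t -> is_derive f t 0) ->
  forall s t, in_dom a b s -> in_dom a b t -> f s = f t.
Proof.
  intros Hf s t Hs Ht.
  assert (Hbetween : forall x, Rmin s t <= x <= Rmax s t -> in_dom a b x)
    by (intros x Hx; exact (in_dom_between a b s t x Hs Ht Hx)).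
  destruct (MVT_gen f s t (fun _ => 0)) as [c [_ Hc]].
  - intros x Hx. apply Hf, Hbetween. lra.
  - intros x Hx. apply continuity_pt_filterlim, (ex_derive_continuous (K := R_AbsRing) (V := R_NormedModule)).
    exists 0. apply Hf, Hbetween, Hx.
  - lra.
Qed.

Lemma affine_below a b p q x s t :
  in_dom a b s -> in_dom a b t -> (forall r, in_dom a b r -> p * r + q <> x) ->
  p * s + q < x -> p * t + q < x.
Proof.
  intros Hs Ht Havoid Hsx.
  destruct (Rlt_le_dec (p * t + q) x) as [Htx | Hxt]; [exact Htx | exfalso].
  assert (Hp : p <> 0) by (intros ->; lra).
  set (r := (x - q) / p).
  assert (Hr : p * r + q = x) by (unfold r; field; exact Hp).
  apply (Havoid r); [|exact Hr].
  apply (in_dom_between a b s t r Hs Ht).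
  destruct (Rle_dec s t).
  - rewrite Rmin_left, Rmax_right by lra. split; nra.
  - rewrite Rmin_right, Rmax_left by lra. split; nra.
Qed.

Lemma sin_affine_range a b p q t0 :
  in_dom a b t0 -> 0 < p * t0 + q < PI ->
  (forall r, in_dom a b r -> 0 < sin (p * r + q)) ->
  forall t, in_dom a b t -> 0 < p * t + q < PI.
Proof.
  intros Ht0 [Hlow0 Hhigh0] Hsin t Ht. split.
  - enough (- p * t + - q < 0) by lra.
    apply (affine_below a b (- p) (- q) 0 t0 t Ht0 Ht); [|lra].
    intros r Hr Hzero. assert (Hs := Hsin r Hr).
    replace (p * r + q) with 0 in Hs by lra. rewrite sin_0 in Hs. lra.
  - apply (affine_below a b p q PI t0 t Ht0 Ht); [|exact Hhigh0].
    intros r Hr Hpi. assert (Hs := Hsin r Hr). rewrite Hpi, sin_PI in Hs. lra.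
Qed.

Lemma RInt_const_on a b (f : R -> R) k s t :
  in_dom a b s -> in_dom a b t -> (forall x, in_dom a b x -> f x = k) ->
  RInt f s t = (t - s) * k.
Proof.
  intros Hs Ht Hf.
  rewrite (RInt_ext f (fun _ => k)); [exact (RInt_const s t k)|].
  intros x Hx. apply Hf, (in_dom_between a b s t x Hs Ht). lra.
Qed.

(** * The equation u'' = -E u *)

Ltac derive_from_hyps :=
  auto_derive;
  [ repeat match goal with |- _ /\ _ => split end;
    try (eexists; eassumption); try exact I
  | repeat match goal with
    | H : is_derive _ ?x ?l |- context [Derive ?f ?x] =>
        rewrite (is_derive_unique f x l H)
    end ].

Lemma harmonic_zero a b E (d d' : R -> R) t0 :
  (forall t, in_dom a b t -> is_derive d t (d' t) /\ is_derive d' t (- E * d t)) ->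
  in_dom a b t0 -> d t0 = 0 -> d' t0 = 0 ->
  forall t, in_dom a b t -> d t = 0.
Proof.
  intros Hd Ht0 Hd0 Hd'0 t Ht.
  destruct (Rlt_le_dec 0 E) as [HE | HE].
  - assert (Henergy : d' t ^ 2 + E * d t ^ 2 = d' t0 ^ 2 + E * d t0 ^ 2).
    { apply (is_derive_0_const a b (fun t => d' t ^ 2 + E * d t ^ 2)); [|exact Ht|exact Ht0].
      intros s Hs. destruct (Hd s Hs) as [Hds Hd's]. derive_from_hyps. ring. }
    rewrite Hd0, Hd'0 in Henergy.
    assert (Hsq : d t ^ 2 = 0).
    { assert (0 <= d' t ^ 2) by apply pow2_ge_0.
      assert (0 <= d t ^ 2) by apply pow2_ge_0. nra. }
    apply Rsqr_eq_0. unfold Rsqr. rewrite <- Hsq. ring.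
  - set (m := sqrt (- E)).
    assert (Hm : m * m = - E) by (apply sqrt_sqrt; lra).
    assert (Hfirst : forall s, in_dom a b s -> d' s = - m * d s).
    { intros s Hs.
      assert (Hc : (d' s + m * d s) * exp (- m * s) = (d' t0 + m * d t0) * exp (- m * t0)).
      { apply (is_derive_0_const a b (fun t => (d' t + m * d t) * exp (- m * t))); [|exact Hs|exact Ht0].
        intros r Hr. destruct (Hd r Hr) as [Hdr Hd'r]. derive_from_hyps. nra. }
      rewrite Hd0, Hd'0 in Hc.
      assert (Hpos : 0 < exp (- m * s)) by apply exp_pos. nra. }
    assert (Hc : d t * exp (m * t) = d t0 * exp (m * t0)).
    { apply (is_derive_0_const a b (fun t => d t * exp (m * t))); [|exact Ht|exact Ht0].
      intros r Hr. destruct (Hd r Hr) as [Hdr _]. derive_from_hyps.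
      rewrite (Hfirst r Hr). ring. }
    rewrite Hd0 in Hc.
    assert (Hpos : 0 < exp (m * t)) by apply exp_pos. nra.
Qed.

Lemma harmonic_unique a b E (u u' w w' : R -> R) t0 :
  (forall t, in_dom a b t -> is_derive u t (u' t) /\ is_derive u' t (- E * u t)) ->
  (forall t, in_dom a b t -> is_derive w t (w' t) /\ is_derive w' t (- E * w t)) ->
  in_dom a b t0 -> u t0 = w t0 -> u' t0 = w' t0 ->
  forall t, in_dom a b t -> u t = w t.
Proof.
  intros Hu Hw Ht0 Hu0 Hu'0 t Ht.
  enough (Hdiff : u t - w t = 0) by lra.
  apply (harmonic_zero a b E (fun t => u t - w t) (fun t => u' t - w' t) t0); try lra; auto.
  intros s Hs. destruct (Hu s Hs) as [Hus Hu's]. destruct (Hw s Hs) as [Hws Hw's].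
  split; [apply (is_derive_minus u w); auto|].
  replace (- E * (u s - w s)) with (- E * u s - - E * w s) by ring.
  apply (is_derive_minus u' w'); auto.
Qed.

Lemma opp_div_sign K x : x ^ 2 = K ^ 2 -> x <> 0 -> - K / x = 1 \/ - K / x = -1.
Proof.
  intros Hx Hx0. assert (Hsq : (- K / x - 1) * (- K / x + 1) = 0).
  { transitivity ((K ^ 2 - x ^ 2) / x ^ 2); [field; exact Hx0 | rewrite <- Hx; field; exact Hx0]. }
  destruct (Rmult_integral _ _ Hsq); [left | right]; lra.
Qed.

Lemma sign_pow2 e : e = 1 \/ e = -1 -> e ^ 2 = 1.
Proof. intros [-> | ->]; ring. Qed.

Lemma sign_mul_pow2 e c : (e = 1 \/ e = -1) -> (- e * c) ^ 2 = c ^ 2.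
Proof. intros [-> | ->]; ring. Qed.

Lemma sinh_pos t : 0 < t -> 0 < sinh t.
Proof. intros Ht. rewrite <- sinh_0. apply sinh_lt, Ht. Qed.

Lemma sinh_pos_inv t : 0 < sinh t -> 0 < t.
Proof.
  intros Hs. destruct (Rtotal_order t 0) as [Hneg | [-> | Hpos]]; [| rewrite sinh_0 in Hs; lra | exact Hpos].
  assert (Hlt := sinh_lt t 0 Hneg). rewrite sinh_0 in Hlt. lra.
Qed.

Lemma cosh_pos t : 0 < cosh t.
Proof. unfold cosh. assert (0 < exp t) by apply exp_pos. assert (0 < exp (- t)) by apply exp_pos. lra. Qed.

Lemma sinh_ge_half t : 0 <= t -> t / 2 <= sinh t.
Proof.
  intros Ht. unfold sinh. rewrite exp_Ropp.
  assert (Hexp := exp_ineq1_le t). assert (Hpos := exp_pos t).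
  assert (Hinv : exp t * / exp t = 1) by (field; lra).
  assert (0 < / exp t) by (apply Rinv_0_lt_compat, Hpos). nra.
Qed.

Lemma cosh2_sub_sinh2 t : cosh t ^ 2 - sinh t ^ 2 = 1.
Proof. unfold cosh, sinh. rewrite exp_Ropp. assert (0 < exp t) by apply exp_pos. field. lra. Qed.

Lemma sin2_add_cos2 t : sin t ^ 2 + cos t ^ 2 = 1.
Proof. rewrite <- (sin2_cos2 t). unfold Rsqr. ring. Qed.

Lemma is_derive_sinh t : is_derive sinh t (cosh t).
Proof. apply is_derive_Reals, derivable_pt_lim_sinh. Qed.

Lemma is_derive_cosh t : is_derive cosh t (sinh t).
Proof. apply is_derive_Reals, derivable_pt_lim_cosh. Qed.

Lemma is_derive_affine_comp (f : R -> R) p q t l :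
  is_derive f (p * t + q) l -> is_derive (fun s => f (p * s + q)) t (p * l).
Proof.
  intros Hf. apply (is_derive_comp f (fun s => p * s + q)); [exact Hf|].
  auto_derive; [exact I | ring].
Qed.

Lemma polar_upper x y :
  0 < y -> exists s, 0 < s < PI /\
    x = sqrt (x ^ 2 + y ^ 2) * cos s /\ y = sqrt (x ^ 2 + y ^ 2) * sin s.
Proof.
  intros Hy. set (r := sqrt (x ^ 2 + y ^ 2)).
  assert (Hr2 : r * r = x ^ 2 + y ^ 2) by (apply sqrt_sqrt; nra).
  assert (Hr : 0 < r) by (apply sqrt_lt_R0; nra).
  assert (Hx : -1 < x / r < 1).
  { split; apply (Rmult_lt_reg_r r); try exact Hr; unfold Rdiv;
      rewrite Rmult_assoc, Rinv_l, Rmult_1_r by lra; nra. }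
  exists (acos (x / r)). split; [apply acos_bound_lt, Hx|].
  rewrite cos_acos, sin_acos by lra. split; [field; lra|].
  replace (1 - (x / r)²) with ((y / r)²) by (unfold Rsqr; field_simplify_eq; [nra | lra]).
  rewrite sqrt_Rsqr; [field; lra|]. apply Rdiv_le_0_compat; lra.
Qed.

Lemma hyperbolic_phase c y :
  0 < c -> 0 < y -> exists s, 0 < s /\ y = c * sinh s /\ c * cosh s = sqrt (c ^ 2 + y ^ 2).
Proof.
  intros Hc Hy. exists (arcsinh (y / c)).
  assert (Hsinh : sinh (arcsinh (y / c)) = y / c) by apply sinh_arcsinh.
  split; [apply sinh_pos_inv; rewrite Hsinh; apply Rdiv_lt_0_compat; lra|].
  split; [rewrite Hsinh; field; lra|].
  rewrite <- (sqrt_pow2 (c * cosh (arcsinh (y / c)))).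
  - f_equal. rewrite Rpow_mult_distr.
    replace (cosh (arcsinh (y / c)) ^ 2) with (1 + sinh (arcsinh (y / c)) ^ 2)
      by (pose proof (cosh2_sub_sinh2 (arcsinh (y / c))); lra).
    rewrite Hsinh. field. lra.
  - apply Rmult_le_pos; [lra | left; apply cosh_pos].
Qed.

Lemma trigonometric_initial_data E K u0 v0 :
  0 < E -> 0 < u0 -> v0 ^ 2 + E * u0 ^ 2 = K ^ 2 ->
  exists c s0, 0 < c /\ 0 < s0 < PI /\ (c * sqrt E) ^ 2 = K ^ 2 /\
    u0 = c * sin s0 /\ v0 = c * sqrt E * cos s0.
Proof.
  intros HE Hu0 Hrel. set (m := sqrt E).
  assert (Hm : m * m = E) by (apply sqrt_sqrt; lra).
  assert (Hm0 : 0 < m) by (apply sqrt_lt_R0; lra).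
  destruct (polar_upper (v0 / m) u0 Hu0) as (s0 & Hs0 & Hv0s & Hu0s).
  set (c := sqrt ((v0 / m) ^ 2 + u0 ^ 2)) in Hv0s, Hu0s.
  assert (Hc2 : c * c = (v0 / m) ^ 2 + u0 ^ 2) by (apply sqrt_sqrt; nra).
  exists c, s0. split; [apply sqrt_lt_R0; nra|]. split; [exact Hs0|].
  split; [|split; [exact Hu0s|]].
  - rewrite <- Hrel, <- Hm. transitivity (c * c * (m * m)); [ring|]. rewrite Hc2. field. lra.
  - rewrite Rmult_assoc, (Rmult_comm m), <- Rmult_assoc, <- Hv0s. field. lra.
Qed.

Lemma hyperbolic_initial_data E K u0 v0 :
  E < 0 -> K <> 0 -> 0 < u0 -> v0 ^ 2 + E * u0 ^ 2 = K ^ 2 ->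
  exists c p s0, 0 < c /\ 0 < s0 /\ p * p = - E /\ (c * p) ^ 2 = K ^ 2 /\
    u0 = c * sinh s0 /\ v0 = c * p * cosh s0.
Proof.
  intros HE HK Hu0 Hrel. set (m := sqrt (- E)).
  assert (Hm : m * m = - E) by (apply sqrt_sqrt; lra).
  assert (Hm0 : 0 < m) by (apply sqrt_lt_R0; lra).
  set (c := Rabs K / m).
  assert (Hc : 0 < c) by (apply Rdiv_lt_0_compat; [apply Rabs_pos_lt, HK | exact Hm0]).
  assert (Hcm : (c * m) ^ 2 = K ^ 2) by (unfold c; rewrite <- (pow2_abs K); field; lra).
  destruct (hyperbolic_phase c u0 Hc Hu0) as (s0 & Hs0 & Hu0s & Hcosh0).
  set (r := sqrt (c ^ 2 + u0 ^ 2)) in Hcosh0.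
  assert (Hr : r * r = c ^ 2 + u0 ^ 2) by (apply sqrt_sqrt; nra).
  assert (Hr0 : 0 < r) by (apply sqrt_lt_R0; nra).
  assert (Hp : v0 / r * (v0 / r) = - E).
  { apply (Rmult_eq_reg_r (r * r)); [|nra].
    transitivity (v0 ^ 2); [field; lra|]. rewrite Hr. nra. }
  exists c, (v0 / r), s0. split; [exact Hc|]. split; [exact Hs0|]. split; [exact Hp|].
  split; [|split; [exact Hu0s|]].
  - rewrite <- Hcm. transitivity (c ^ 2 * (v0 / r * (v0 / r))); [ring|]. rewrite Hp, <- Hm. ring.
  - rewrite Rmult_assoc, (Rmult_comm _ (cosh s0)), <- Rmult_assoc, Hcosh0. field. lra.
Qed.

(** * The geodesic equations *)

Lemma geodesic_intro a b x1 x2 (d1 d2 dd1 dd2 : R -> R) :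
  (forall t, in_dom a b t ->
     0 < x1 t /\ is_derive x1 t (d1 t) /\ is_derive x2 t (d2 t) /\
     is_derive d1 t (dd1 t) /\ is_derive d2 t (dd2 t) /\
     dd1 t = (d1 t ^ 2 + d2 t ^ 2) / x1 t /\ dd2 t = 2 * d1 t * d2 t / x1 t) ->
  geodesic a b x1 x2.
Proof.
  intros H t Ht.
  destruct (H t Ht) as (Hx1 & Hd1 & Hd2 & Hdd1 & Hdd2 & Heq1 & Heq2).
  assert (Hloc : forall (f df : R -> R),
            (forall s, in_dom a b s -> is_derive f s (df s)) -> locally t (fun s => df s = Derive f s)).
  { intros f df Hf. apply (filter_imp (in_dom a b)); [|exact (in_dom_locally a b t Ht)].
    intros s Hs. symmetry. apply is_derive_unique, Hf, Hs. }
  assert (Hdd1' : is_derive (Derive x1) t (dd1 t)).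
  { apply (is_derive_ext_loc d1); [|exact Hdd1]. apply Hloc. intros s Hs; apply (H s Hs). }
  assert (Hdd2' : is_derive (Derive x2) t (dd2 t)).
  { apply (is_derive_ext_loc d2); [|exact Hdd2]. apply Hloc. intros s Hs; apply (H s Hs). }
  split; [exact Hx1 | split].
  - intros [|]; split; eexists; eassumption.
  - rewrite (is_derive_unique _ _ _ Hd1), (is_derive_unique _ _ _ Hd2).
    intros [|]; simpl;
      [rewrite (is_derive_unique _ _ _ Hdd1'), Heq1 | rewrite (is_derive_unique _ _ _ Hdd2'), Heq2];
      field; lra.
Qed.

Lemma geodesic_elim a b x1 x2 t :
  geodesic a b x1 x2 -> in_dom a b t ->
  0 < x1 t /\ is_derive x1 t (Derive x1 t) /\ is_derive x2 t (Derive x2 t) /\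
  is_derive (Derive x1) t (Derive (Derive x1) t) /\
  is_derive (Derive x2) t (Derive (Derive x2) t) /\
  Derive (Derive x1) t = (Derive x1 t ^ 2 + Derive x2 t ^ 2) / x1 t /\
  Derive (Derive x2) t = 2 * Derive x1 t * Derive x2 t / x1 t.
Proof.
  intros Hgeo Ht. destruct (Hgeo t Ht) as (Hx1 & Hder & Heq).
  destruct (Hder i1) as [Hd1 Hdd1]; destruct (Hder i2) as [Hd2 Hdd2].
  assert (Heq1 := Heq i1); assert (Heq2 := Heq i2); simpl in *.
  refine (conj Hx1 (conj _ (conj _ (conj _ (conj _ (conj _ _))))));
    try (apply Derive_correct; assumption).
  - apply Rminus_diag_uniq. rewrite <- Heq1. field. lra.
  - apply Rminus_diag_uniq. rewrite <- Heq2. field. lra.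
Qed.

(* For a geodesic, E is g(s',s') and K = x2'/(x1)^2 is the momentum of the
   Killing field d/dx2. *)
Definition harmonic_form (a b : Rbar) (E K : R) (u v x1 x2 : R -> R) : Prop :=
  forall t, in_dom a b t ->
    0 < u t /\ x1 t = / u t /\
    is_derive u t (v t) /\ is_derive v t (- E * u t) /\
    is_derive x2 t (K / u t ^ 2) /\ v t ^ 2 + E * u t ^ 2 = K ^ 2.

Section HarmonicForm.

Variables (a b : Rbar) (E K : R) (u v x1 x2 : R -> R).
Hypothesis Hform : harmonic_form a b E K u v x1 x2.

Lemma harmonic_form_derive_x1 t : in_dom a b t -> is_derive x1 t (- v t / u t ^ 2).
Proof.
  intros Ht. destruct (Hform t Ht) as (Hu & _ & Hdu & _).
  apply (is_derive_ext_loc (fun s => / u s)).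
  - apply (filter_imp (in_dom a b)); [|exact (in_dom_locally a b t Ht)].
    intros s Hs. symmetry. apply (Hform s Hs).
  - apply is_derive_inv; [exact Hdu | lra].
Qed.

Lemma harmonic_form_geodesic : geodesic a b x1 x2.
Proof.
  apply geodesic_intro with (fun t => - v t / u t ^ 2) (fun t => K / u t ^ 2)
    (fun t => E / u t + 2 * v t ^ 2 / u t ^ 3) (fun t => - 2 * K * v t / u t ^ 3).
  intros t Ht. destruct (Hform t Ht) as (Hu & Hx1 & Hdu & Hdv & Hdx2 & Hrel).
  refine (conj _ (conj _ (conj _ (conj _ (conj _ (conj _ _)))))).
  - rewrite Hx1. apply Rinv_0_lt_compat, Hu.
  - apply harmonic_form_derive_x1, Ht.
  - exact Hdx2.
  - derive_from_hyps; [apply Rgt_not_eq; nra | field; lra].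
  - derive_from_hyps; [apply Rgt_not_eq; nra | field; lra].
  - rewrite Hx1. apply (Rmult_eq_reg_r (u t ^ 3)); [|apply pow_nonzero; lra].
    transitivity (E * u t ^ 2 + 2 * v t ^ 2); [field; lra|].
    transitivity (v t ^ 2 + K ^ 2); [lra | field; lra].
  - rewrite Hx1. field. lra.
Qed.

Lemma harmonic_form_gnorm t : in_dom a b t -> gnorm x1 x2 t = E.
Proof.
  intros Ht. destruct (Hform t Ht) as (Hu & Hx1 & _ & _ & Hdx2 & Hrel).
  unfold gnorm.
  rewrite (is_derive_unique _ _ _ (harmonic_form_derive_x1 t Ht)), (is_derive_unique _ _ _ Hdx2), Hx1.
  transitivity ((K ^ 2 - v t ^ 2) / u t ^ 2); [field; lra|].
  rewrite <- Hrel. field. lra.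
Qed.

Lemma harmonic_form_hyperbola t0 :
  in_dom a b t0 -> K <> 0 ->
  exists beta, forall t, in_dom a b t -> x1 t ^ 2 - E / K ^ 2 = (x2 t + beta) ^ 2.
Proof.
  intros Ht0 HK. exists (- (x2 t0 + v t0 / (K * u t0))). intros t Ht.
  assert (Hconst : x2 t + v t / (K * u t) = x2 t0 + v t0 / (K * u t0)).
  { apply (is_derive_0_const a b (fun t => x2 t + v t / (K * u t))); [|exact Ht|exact Ht0].
    intros s Hs. destruct (Hform s Hs) as (Hu & _ & Hdu & Hdv & Hdx2 & Hrel).
    assert (HKu : K * u s <> 0) by (apply Rmult_integral_contrapositive_currified; [exact HK | lra]).
    derive_from_hyps; [exact HKu|].
    apply (Rmult_eq_reg_r (K * u s ^ 2)); [|apply Rmult_integral_contrapositive_currified; [exact HK | apply pow_nonzero; lra]].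
    transitivity (K ^ 2 - (v s ^ 2 + E * u s ^ 2)); [field; lra | rewrite Hrel; ring]. }
  destruct (Hform t Ht) as (Hu & Hx1 & _ & _ & _ & Hrel).
  replace (x2 t + - (x2 t0 + v t0 / (K * u t0))) with (- (v t / (K * u t))) by lra.
  rewrite Hx1.
  transitivity ((K ^ 2 - E * u t ^ 2) / (K ^ 2 * u t ^ 2)); [field; lra|].
  replace (K ^ 2 - E * u t ^ 2) with (v t ^ 2) by lra. field. lra.
Qed.

End HarmonicForm.

Section GeodesicInvariants.

Variables (a b : Rbar) (x1 x2 : R -> R).
Hypothesis Hgeo : geodesic a b x1 x2.

Lemma geodesic_momentum_const s t :
  in_dom a b s -> in_dom a b t -> Derive x2 s / x1 s ^ 2 = Derive x2 t / x1 t ^ 2.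
Proof.
  apply (is_derive_0_const a b (fun t => Derive x2 t / x1 t ^ 2)).
  intros r Hr. destruct (geodesic_elim a b x1 x2 r Hgeo Hr) as (Hx1 & Hd1 & Hd2 & Hdd1 & Hdd2 & Heq1 & Heq2).
  derive_from_hyps; [apply Rgt_not_eq; nra|]. rewrite Heq2. field. lra.
Qed.

Lemma geodesic_gnorm_const s t :
  in_dom a b s -> in_dom a b t -> gnorm x1 x2 s = gnorm x1 x2 t.
Proof.
  apply (is_derive_0_const a b (gnorm x1 x2)).
  intros r Hr. destruct (geodesic_elim a b x1 x2 r Hgeo Hr) as (Hx1 & Hd1 & Hd2 & Hdd1 & Hdd2 & Heq1 & Heq2).
  unfold gnorm. derive_from_hyps; [apply Rgt_not_eq; nra|]. rewrite Heq1, Heq2. field. lra.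
Qed.

Lemma geodesic_harmonic_form t0 :
  in_dom a b t0 ->
  harmonic_form a b (gnorm x1 x2 t0) (Derive x2 t0 / x1 t0 ^ 2)
    (fun t => / x1 t) (fun t => - Derive x1 t / x1 t ^ 2) x1 x2.
Proof.
  intros Ht0 t Ht.
  rewrite (geodesic_gnorm_const t0 t Ht0 Ht), (geodesic_momentum_const t0 t Ht0 Ht).
  destruct (geodesic_elim a b x1 x2 t Hgeo Ht) as (Hx1 & Hd1 & Hd2 & Hdd1 & Hdd2 & Heq1 & Heq2).
  refine (conj _ (conj _ (conj _ (conj _ (conj _ _))))).
  - apply Rinv_0_lt_compat, Hx1.
  - rewrite Rinv_inv. reflexivity.
  - apply is_derive_inv; [exact Hd1 | lra].
  - unfold gnorm. derive_from_hyps; [apply Rgt_not_eq; nra|]. rewrite Heq1. field. lra.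
  - replace (Derive x2 t / x1 t ^ 2 / (/ x1 t) ^ 2) with (Derive x2 t) by (field; lra). exact Hd2.
  - unfold gnorm. field. lra.
Qed.

End GeodesicInvariants.

(** * Classification *)

Lemma is_derive_scale_shift (f : R -> R) c e be t l :
  is_derive f t l -> is_derive (fun t => e * f t / c + be) t (e * l / c).
Proof. intros Hf. derive_from_hyps. unfold Rdiv. ring. Qed.

Lemma is_derive_coth t : 0 < t -> is_derive (fun t => cosh t / sinh t) t (- / sinh t ^ 2).
Proof.
  intros Ht. assert (Hs := sinh_pos t Ht).
  replace (- / sinh t ^ 2) with ((sinh t * sinh t - cosh t * cosh t) / sinh t ^ 2)
    by (replace (sinh t * sinh t - cosh t * cosh t) with (- (cosh t ^ 2 - sinh t ^ 2)) by ring;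
        rewrite cosh2_sub_sinh2; field; lra).
  apply is_derive_div; [apply is_derive_cosh | apply is_derive_sinh | lra].
Qed.

Lemma is_derive_cot t : sin t <> 0 -> is_derive (fun t => cos t / sin t) t (- / sin t ^ 2).
Proof.
  intros Hs. auto_derive; [exact Hs|].
  transitivity (- (sin t ^ 2 + cos t ^ 2) / sin t ^ 2); [field; exact Hs|].
  rewrite sin2_add_cos2. field. exact Hs.
Qed.

Lemma is_derive_sig2_2 e al t : t <> 0 -> is_derive (sig2_2 e al) t (- e / t ^ 2).
Proof. intros Ht. unfold sig2_2. auto_derive; [exact Ht | field; exact Ht]. Qed.

Lemma is_derive_sig3_2 c e be t :
  c <> 0 -> 0 < t -> is_derive (sig3_2 c e be) t (- e / (c * sinh t ^ 2)).
Proof.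
  intros Hc Ht. assert (Hs := sinh_pos t Ht).
  replace (- e / (c * sinh t ^ 2)) with (e * (- / sinh t ^ 2) / c) by (field; lra).
  apply (is_derive_scale_shift (fun t => cosh t / sinh t)), is_derive_coth, Ht.
Qed.

Lemma is_derive_sig4_2 c e be t :
  c <> 0 -> sin t <> 0 -> is_derive (sig4_2 c e be) t (- e / (c * sin t ^ 2)).
Proof.
  intros Hc Hs.
  replace (- e / (c * sin t ^ 2)) with (e * (- / sin t ^ 2) / c) by (field; lra).
  apply (is_derive_scale_shift (fun t => cos t / sin t)), is_derive_cot, Hs.
Qed.

Section Classification.

Variables (a b : Rbar) (E K : R) (u v x1 x2 : R -> R) (t0 : R).
Hypothesis Hform : harmonic_form a b E K u v x1 x2.
Hypothesis Ht0 : in_dom a b t0.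

Lemma harmonic_form_u_eq (w w' : R -> R) :
  (forall t, is_derive w t (w' t) /\ is_derive w' t (- E * w t)) ->
  w t0 = u t0 -> w' t0 = v t0 -> forall t, in_dom a b t -> u t = w t.
Proof.
  intros Hw Hw0 Hw'0. apply (harmonic_unique a b E u v w w' t0); auto.
  intros t Ht. destruct (Hform t Ht) as (_ & _ & Hu & Hv & _). auto.
Qed.

Lemma harmonic_form_reparam (A B : Rbar) (y1 y2 : R -> R) p q :
  (forall t, in_dom a b t ->
     in_dom A B (p * t + q) /\ x1 t = y1 (p * t + q) /\
     is_derive (fun s => y2 (p * s + q)) t (K / u t ^ 2)) ->
  x2 t0 = y2 (p * t0 + q) ->
  forall t, in_dom a b t ->
    in_dom A B (p * t + q) /\ x1 t = y1 (p * t + q) /\ x2 t = y2 (p * t + q).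
Proof.
  intros Hy Hy0 t Ht. destruct (Hy t Ht) as (Hdom & Hx1 & _).
  split; [exact Hdom | split; [exact Hx1|]].
  enough (Hdiff : x2 t - y2 (p * t + q) = x2 t0 - y2 (p * t0 + q)) by lra.
  apply (is_derive_0_const a b (fun t => x2 t - y2 (p * t + q))); [|exact Ht|exact Ht0].
  intros s Hs. replace 0 with (K / u s ^ 2 - K / u s ^ 2) by ring.
  apply (is_derive_minus x2 (fun s => y2 (p * s + q))); [apply (Hform s Hs) | apply (Hy s Hs)].
Qed.

Lemma classify_constant_x2 :
  K = 0 -> nonconstant a b x1 x2 ->
  exists al, reparam_of a b x1 x2 m_infty p_infty sig1_1 (sig1_2 al).
Proof.
  intros HK Hnc. destruct (Hform t0 Ht0) as (Hu0 & _ & _ & _ & _ & Hrel0).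
  set (B := - v t0 / u t0).
  assert (HE : E = - B ^ 2).
  { rewrite HK in Hrel0. apply (Rmult_eq_reg_r (u t0 ^ 2)); [|apply pow_nonzero; lra].
    unfold B. field_simplify; [|lra]. simpl in Hrel0 |- *. lra. }
  set (q := - B * t0 - ln (u t0)).
  assert (Hu_eq : forall t, in_dom a b t -> u t = u t0 * exp (- B * (t - t0))).
  { apply harmonic_form_u_eq with (fun t => - B * (u t0 * exp (- B * (t - t0)))).
    - intros t. split; auto_derive; try exact I; rewrite ?HE; unfold Rminus; ring.
    - rewrite Rminus_diag, Rmult_0_r, exp_0. ring.
    - rewrite Rminus_diag, Rmult_0_r, exp_0. unfold B. field. lra. }
  assert (Hx1 : forall t, in_dom a b t -> x1 t = exp (B * t + q)).
  { intros t Ht. destruct (Hform t Ht) as (_ & Hx1 & _). rewrite Hx1, (Hu_eq t Ht).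
    replace (B * t + q) with (B * (t - t0) + - ln (u t0)) by (unfold q; ring).
    replace (- B * (t - t0)) with (- (B * (t - t0))) by ring.
    rewrite exp_plus, !exp_Ropp, (exp_ln (u t0) Hu0).
    assert (0 < exp (B * (t - t0))) by apply exp_pos.
    field. split; apply Rgt_not_eq; assumption. }
  assert (Hreparam : forall t, in_dom a b t -> in_dom m_infty p_infty (B * t + q) /\
            x1 t = sig1_1 (B * t + q) /\ x2 t = sig1_2 (x2 t0) (B * t + q)).
  { apply harmonic_form_reparam; [|reflexivity].
    intros t Ht. split; [split; exact I | split; [apply Hx1, Ht|]].
    rewrite HK. unfold sig1_2. auto_derive; [exact I | unfold Rdiv; ring]. }
  exists (x2 t0), B, q. split; [|exact Hreparam].
  intros HB. destruct Hnc as (s & t & Hs & Ht & Hneq). apply Hneq.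
  destruct (Hreparam s Hs) as (_ & Hx1s & Hx2s). destruct (Hreparam t Ht) as (_ & Hx1t & Hx2t).
  rewrite Hx1s, Hx2s, Hx1t, Hx2t, HB, !Rmult_0_l. reflexivity.
Qed.

Lemma classify_null :
  K <> 0 -> E = 0 ->
  exists al e, (e = 1 \/ e = -1) /\ reparam_of a b x1 x2 0 p_infty sig2_1 (sig2_2 e al).
Proof.
  intros HK HE. destruct (Hform t0 Ht0) as (Hu0 & _ & _ & _ & _ & Hrel0).
  rewrite HE, Rmult_0_l, Rplus_0_r in Hrel0.
  assert (Hv0 : v t0 <> 0) by (intros Hv; rewrite Hv in Hrel0; apply HK, Rsqr_eq_0; unfold Rsqr; simpl in Hrel0; lra).
  set (q := u t0 - v t0 * t0).
  assert (Hu_eq : forall t, in_dom a b t -> u t = v t0 * t + q).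
  { apply harmonic_form_u_eq with (fun _ => v t0).
    - intros t. rewrite HE. split; auto_derive; try exact I; ring.
    - unfold q. ring.
    - reflexivity. }
  set (e := - K / v t0).
  exists (x2 t0 - e * / (v t0 * t0 + q)), e. split; [exact (opp_div_sign K (v t0) Hrel0 Hv0)|].
  exists (v t0), q. split; [exact Hv0|].
  apply harmonic_form_reparam; [|unfold sig2_2; ring].
  intros t Ht. destruct (Hform t Ht) as (Hu & Hx1 & _). rewrite (Hu_eq t Ht) in Hu, Hx1 |- *.
  split; [split; [exact Hu | exact I]|]. split; [exact Hx1|].
  replace (K / (v t0 * t + q) ^ 2) with (v t0 * (- e / (v t0 * t + q) ^ 2))
    by (unfold e; field; split; [apply Rgt_not_eq, Hu | exact Hv0]).
  apply is_derive_affine_comp, is_derive_sig2_2, Rgt_not_eq, Hu.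
Qed.

Lemma classify_timelike :
  K <> 0 -> E < 0 ->
  exists c be e, 0 < c /\ (e = 1 \/ e = -1) /\
    reparam_of a b x1 x2 0 p_infty (sig3_1 c) (sig3_2 c e be).
Proof.
  intros HK HE. destruct (Hform t0 Ht0) as (Hu0 & _ & _ & _ & _ & Hrel0).
  destruct (hyperbolic_initial_data E K (u t0) (v t0) HE HK Hu0 Hrel0)
    as (c & p & s0 & Hc & Hs0 & Hp & Hcp & Hu0s & Hv0s).
  assert (Hp0 : p <> 0) by (intros Hp0; rewrite Hp0 in Hp; lra).
  set (q := s0 - p * t0).
  assert (Hphase : p * t0 + q = s0) by (unfold q; ring).
  assert (Hu_eq : forall t, in_dom a b t -> u t = c * sinh (p * t + q)).
  { apply harmonic_form_u_eq with (fun t => c * (p * cosh (p * t + q))).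
    - intros t. split.
      + apply is_derive_scal, (is_derive_affine_comp sinh), is_derive_sinh.
      + replace (- E * (c * sinh (p * t + q))) with (c * (p * (p * sinh (p * t + q))))
          by (rewrite <- Hp; ring).
        apply is_derive_scal, is_derive_scal, (is_derive_affine_comp cosh), is_derive_cosh.
    - rewrite Hphase. symmetry. exact Hu0s.
    - rewrite Hphase, Hv0s. ring. }
  set (e := - K / (c * p)).
  assert (He : e = 1 \/ e = -1) by (apply opp_div_sign; [exact Hcp | apply Rmult_integral_contrapositive_currified; lra]).
  exists c, (x2 t0 - e * (cosh s0 / sinh s0) / c), e.
  split; [exact Hc | split; [exact He|]].
  exists p, q. split; [exact Hp0|].
  apply harmonic_form_reparam; [|rewrite Hphase; unfold sig3_2; ring].
  intros t Ht. destruct (Hform t Ht) as (Hu & Hx1 & _). rewrite (Hu_eq t Ht) in Hu, Hx1 |- *.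
  assert (Hsinh : 0 < sinh (p * t + q)) by nra.
  split; [split; [exact (sinh_pos_inv _ Hsinh) | exact I]|]. split; [exact Hx1|].
  replace (K / (c * sinh (p * t + q)) ^ 2) with (p * (- e / (c * sinh (p * t + q) ^ 2)))
    by (unfold e; field; lra).
  apply is_derive_affine_comp, is_derive_sig3_2; [lra | exact (sinh_pos_inv _ Hsinh)].
Qed.

Lemma classify_spacelike :
  K <> 0 -> 0 < E ->
  exists c be e, 0 < c /\ (e = 1 \/ e = -1) /\
    reparam_of a b x1 x2 0 PI (sig4_1 c) (sig4_2 c e be).
Proof.
  intros HK HE. destruct (Hform t0 Ht0) as (Hu0 & _ & _ & _ & _ & Hrel0).
  destruct (trigonometric_initial_data E K (u t0) (v t0) HE Hu0 Hrel0)
    as (c & s0 & Hc & Hs0 & Hcm & Hu0s & Hv0s).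
  set (m := sqrt E) in Hcm, Hv0s.
  assert (Hm : m * m = E) by (apply sqrt_sqrt; lra).
  assert (Hm0 : 0 < m) by (apply sqrt_lt_R0; lra).
  set (q := s0 - m * t0).
  assert (Hphase : m * t0 + q = s0) by (unfold q; ring).
  assert (Hu_eq : forall t, in_dom a b t -> u t = c * sin (m * t + q)).
  { apply harmonic_form_u_eq with (fun t => c * m * cos (m * t + q)).
    - intros t. split; auto_derive; try exact I; [ring | rewrite <- Hm; ring].
    - rewrite Hphase. symmetry. exact Hu0s.
    - rewrite Hphase. symmetry. exact Hv0s. }
  assert (Hrange : forall t, in_dom a b t -> 0 < m * t + q < PI).
  { apply (sin_affine_range a b m q t0 Ht0); [rewrite Hphase; exact Hs0|].
    intros r Hr. destruct (Hform r Hr) as (Hur & _). rewrite (Hu_eq r Hr) in Hur. nra. }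
  set (e := - K / (c * m)).
  assert (He : e = 1 \/ e = -1) by (apply opp_div_sign; [exact Hcm | apply Rmult_integral_contrapositive_currified; lra]).
  exists c, (x2 t0 - e * (cos s0 / sin s0) / c), e.
  split; [exact Hc | split; [exact He|]].
  exists m, q. split; [lra|].
  apply harmonic_form_reparam; [|rewrite Hphase; unfold sig4_2; ring].
  intros t Ht. destruct (Hform t Ht) as (_ & Hx1 & _). rewrite (Hu_eq t Ht) in Hx1 |- *.
  assert (Hsin : 0 < sin (m * t + q)) by (apply sin_gt_0; apply Hrange, Ht).
  split; [split; apply Hrange, Ht|]. split; [exact Hx1|].
  replace (K / (c * sin (m * t + q)) ^ 2) with (m * (- e / (c * sin (m * t + q) ^ 2)))
    by (unfold e; field; lra).
  apply is_derive_affine_comp, is_derive_sig4_2; lra.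
Qed.

End Classification.

Lemma geodesic_classification a b x1 x2 :
  geodesic a b x1 x2 -> nonconstant a b x1 x2 ->
  (exists al, reparam_of a b x1 x2 m_infty p_infty sig1_1 (sig1_2 al)) \/
  (exists al e, (e = 1 \/ e = -1) /\
     reparam_of a b x1 x2 0 p_infty sig2_1 (sig2_2 e al)) \/
  (exists c be e, 0 < c /\ (e = 1 \/ e = -1) /\
     reparam_of a b x1 x2 0 p_infty (sig3_1 c) (sig3_2 c e be)) \/
  (exists c be e, 0 < c /\ (e = 1 \/ e = -1) /\
     reparam_of a b x1 x2 0 PI (sig4_1 c) (sig4_2 c e be)).
Proof.
  intros Hgeo Hnc. pose proof Hnc as (t0 & _ & Ht0 & _).
  assert (Hform := geodesic_harmonic_form a b x1 x2 Hgeo t0 Ht0).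
  set (K := Derive x2 t0 / x1 t0 ^ 2) in Hform.
  set (E := gnorm x1 x2 t0) in Hform.
  destruct (Req_dec K 0) as [HK | HK].
  - left. exact (classify_constant_x2 _ _ _ _ _ _ _ _ _ Hform Ht0 HK Hnc).
  - destruct (Rtotal_order E 0) as [HE | [HE | HE]].
    + right; right; left. exact (classify_timelike _ _ _ _ _ _ _ _ _ Hform Ht0 HK HE).
    + right; left. exact (classify_null _ _ _ _ _ _ _ _ _ Hform Ht0 HK HE).
    + right; right; right. exact (classify_spacelike _ _ _ _ _ _ _ _ _ Hform Ht0 HK HE).
Qed.

(** * The model geodesics *)

Lemma sig1_harmonic_form al :
  harmonic_form m_infty p_infty (-1) 0 (fun t => exp (- t)) (fun t => - exp (- t))
    sig1_1 (sig1_2 al).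
Proof.
  intros t _. refine (conj (exp_pos _) (conj _ (conj _ (conj _ (conj _ _))))).
  - unfold sig1_1. rewrite exp_Ropp, Rinv_inv. reflexivity.
  - auto_derive; [exact I | ring].
  - auto_derive; [exact I | ring].
  - unfold sig1_2. auto_derive; [exact I | unfold Rdiv; ring].
  - ring.
Qed.

Lemma sig2_harmonic_form e al :
  (e = 1 \/ e = -1) ->
  harmonic_form 0 p_infty 0 (- e) (fun t => t) (fun _ => 1) sig2_1 (sig2_2 e al).
Proof.
  intros He t [Ht _]. simpl in Ht.
  refine (conj Ht (conj eq_refl (conj _ (conj _ (conj _ _))))).
  - auto_derive; [exact I | ring].
  - auto_derive; [exact I | ring].
  - apply is_derive_sig2_2. lra.
  - destruct He as [-> | ->]; ring.
Qed.

Lemma sig3_harmonic_form c e be :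
  0 < c -> (e = 1 \/ e = -1) ->
  harmonic_form 0 p_infty (-1) (- e * c) (fun t => c * sinh t) (fun t => c * cosh t)
    (sig3_1 c) (sig3_2 c e be).
Proof.
  intros Hc He t [Ht _]. simpl in Ht. assert (Hs := sinh_pos t Ht).
  refine (conj _ (conj eq_refl (conj _ (conj _ (conj _ _))))).
  - apply Rmult_lt_0_compat; lra.
  - apply is_derive_scal, is_derive_sinh.
  - replace (- -1 * (c * sinh t)) with (c * sinh t) by ring.
    apply is_derive_scal, is_derive_cosh.
  - replace (- e * c / (c * sinh t) ^ 2) with (- e / (c * sinh t ^ 2)) by (field; lra).
    apply is_derive_sig3_2; lra.
  - transitivity (c ^ 2 * (cosh t ^ 2 - sinh t ^ 2)); [ring|].
    rewrite cosh2_sub_sinh2, <- (sign_pow2 e He) at 1. ring.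
Qed.

Lemma sig4_harmonic_form c e be :
  0 < c -> (e = 1 \/ e = -1) ->
  harmonic_form 0 PI 1 (- e * c) (fun t => c * sin t) (fun t => c * cos t)
    (sig4_1 c) (sig4_2 c e be).
Proof.
  intros Hc He t [Ht0 HtPI]. simpl in Ht0, HtPI.
  assert (Hs : 0 < sin t) by (apply sin_gt_0; lra).
  refine (conj _ (conj eq_refl (conj _ (conj _ (conj _ _))))).
  - apply Rmult_lt_0_compat; lra.
  - auto_derive; [exact I | ring].
  - auto_derive; [exact I | ring].
  - replace (- e * c / (c * sin t) ^ 2) with (- e / (c * sin t ^ 2)) by (field; lra).
    apply is_derive_sig4_2; lra.
  - transitivity (c ^ 2 * (sin t ^ 2 + cos t ^ 2)); [ring|].
    rewrite sin2_add_cos2, <- (sign_pow2 e He) at 1. ring.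
Qed.

Lemma complete_right_pinfty a x1 x2 :
  geodesic a p_infty x1 x2 -> complete_right a p_infty x1 x2.
Proof. intros Hgeo. exists x1, x2. split; [exact Hgeo | auto]. Qed.

Lemma complete_left_minfty b x1 x2 :
  geodesic m_infty b x1 x2 -> complete_left m_infty b x1 x2.
Proof. intros Hgeo. exists x1, x2. split; [exact Hgeo | auto]. Qed.

Lemma finite_lim_not_pinfty {T} (F : (T -> Prop) -> Prop) {FF : ProperFilter F} (f : T -> R) l :
  filterlim f F (locally l) -> filterlim f F (Rbar_locally p_infty) -> False.
Proof.
  intros Hl Hp.
  assert (Hnear := Hl _ (locally_ball l (mkposreal 1 Rlt_0_1))).
  assert (Hbig : F (fun t => l + 1 < f t)) by (apply Hp; exists (l + 1); auto).
  destruct (filter_ex _ (filter_and _ _ Hnear Hbig)) as (t & Hball & Hlt).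
  apply Rabs_lt_between' in Hball. simpl in Hball. lra.
Qed.

Lemma filterlim_within_of_derive (f : R -> R) x (D : R -> Prop) l :
  ex_derive f x -> f x = l -> filterlim f (within D (locally x)) (locally l).
Proof.
  intros Hd <-. apply (filterlim_filter_le_1 _ (filter_le_within D)).
  exact (ex_derive_continuous (K := R_AbsRing) (V := R_NormedModule) f x Hd).
Qed.

Lemma not_complete_left (a : R) (b : Rbar) x1 x2 :
  Rbar_lt a b -> filterlim x1 (at_right a) (Rbar_locally p_infty) -> ~ complete_left a b x1 x2.
Proof.
  intros Hab Hlim (y1 & y2 & Hgeo & Hext).
  destruct (Hgeo a (conj I Hab)) as (_ & Hder & _). destruct (Hder i1) as [Hd _].
  apply (finite_lim_not_pinfty (at_right a) y1 (y1 a)).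
  - exact (filterlim_within_of_derive y1 a _ (y1 a) Hd eq_refl).
  - apply (filterlim_ext_loc x1); [|exact Hlim].
    apply (filter_imp (in_dom a b)); [|exact (in_dom_at_right a b Hab)].
    intros t Ht. symmetry. apply (Hext t Ht).
Qed.

Lemma not_complete_right (a : Rbar) (b : R) x1 x2 :
  Rbar_lt a b -> filterlim x1 (at_left b) (Rbar_locally p_infty) -> ~ complete_right a b x1 x2.
Proof.
  intros Hab Hlim (y1 & y2 & Hgeo & Hext).
  destruct (Hgeo b (conj Hab I)) as (_ & Hder & _). destruct (Hder i1) as [Hd _].
  apply (finite_lim_not_pinfty (at_left b) y1 (y1 b)).
  - exact (filterlim_within_of_derive y1 b _ (y1 b) Hd eq_refl).
  - apply (filterlim_ext_loc x1); [|exact Hlim].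
    apply (filter_imp (in_dom a b)); [|exact (in_dom_at_left a b Hab)].
    intros t Ht. symmetry. apply (Hext t Ht).
Qed.

Lemma inv_blowup_within (f : R -> R) x (D : R -> Prop) :
  ex_derive f x -> f x = 0 -> within D (locally x) (fun t => 0 < f t) ->
  filterlim (fun t => / f t) (within D (locally x)) (Rbar_locally p_infty).
Proof.
  intros Hd Hf0 Hpos.
  apply (filterlim_comp _ _ _ f Rinv _ (at_right 0)); [|exact filterlim_Rinv_0_right].
  intros P [eps HP].
  assert (Hnear := filterlim_within_of_derive f x D 0 Hd Hf0 _ (locally_ball 0 eps)).
  apply (filter_imp _ _ (fun t Ht => HP (f t) (proj1 Ht) (proj2 Ht))).
  exact (filter_and _ _ Hnear Hpos).
Qed.

Lemma filterlim_affine_pinfty {T} (F : (T -> Prop) -> Prop) {FF : Filter F} (f : T -> R) c e be :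
  filterlim f F (Rbar_locally p_infty) -> 0 < c -> (e = 1 \/ e = -1) ->
  filterlim (fun t => e * f t / c + be) F (Rbar_locally (if Rlt_dec 0 e then p_infty else m_infty)).
Proof.
  intros Hf Hc He. apply (filterlim_comp _ _ _ f (fun y => e * y / c + be) F (Rbar_locally p_infty)); [exact Hf|].
  intros P HP. destruct He as [-> | ->];
    destruct (Rlt_dec 0 _) as [Hsign | Hsign]; try lra; destruct HP as [M HM].
  - exists (c * (M - be)). intros y Hy. apply HM.
    assert (M - be < y / c) by (apply (Rmult_lt_reg_l c); [lra|]; field_simplify; lra). lra.
  - exists (c * (be - M)). intros y Hy. apply HM.
    assert (be - M < y / c) by (apply (Rmult_lt_reg_l c); [lra|]; field_simplify; lra). lra.
Qed.

Lemma if_sign_opp e :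
  (e = 1 \/ e = -1) ->
  (if Rlt_dec 0 (- e) then p_infty else m_infty) = (if Rlt_dec 0 e then m_infty else p_infty).
Proof.
  intros [-> | ->]; destruct (Rlt_dec 0 _), (Rlt_dec 0 _); reflexivity || lra.
Qed.

Lemma sin_pos_at_right_0 : at_right 0 (fun t => 0 < sin t).
Proof.
  apply (filter_imp (in_dom 0 PI)); [intros t [Ht0 HtPI]; apply sin_gt_0; simpl in *; lra|].
  apply (in_dom_at_right 0 PI), PI_RGT_0.
Qed.

Lemma sin_pos_at_left_PI : at_left PI (fun t => 0 < sin t).
Proof.
  apply (filter_imp (in_dom 0 PI)); [intros t [Ht0 HtPI]; apply sin_gt_0; simpl in *; lra|].
  apply (in_dom_at_left 0 PI), PI_RGT_0.
Qed.

Lemma inv_sin_at_right_0 c :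
  0 < c -> filterlim (fun t => / (c * sin t)) (at_right 0) (Rbar_locally p_infty).
Proof.
  intros Hc. apply (inv_blowup_within (fun t => c * sin t)).
  - auto_derive. exact I.
  - rewrite sin_0. ring.
  - apply (filter_imp _ _ (fun t Ht => Rmult_lt_0_compat c (sin t) Hc Ht)), sin_pos_at_right_0.
Qed.

Lemma inv_sin_at_left_PI c :
  0 < c -> filterlim (fun t => / (c * sin t)) (at_left PI) (Rbar_locally p_infty).
Proof.
  intros Hc. apply (inv_blowup_within (fun t => c * sin t)).
  - auto_derive. exact I.
  - rewrite sin_PI. ring.
  - apply (filter_imp _ _ (fun t Ht => Rmult_lt_0_compat c (sin t) Hc Ht)), sin_pos_at_left_PI.
Qed.

Lemma cot_at_right_0 : filterlim (fun t => cos t / sin t) (at_right 0) (Rbar_locally p_infty).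
Proof.
  apply (filterlim_ext (fun t => / (1 * sin t) * cos t)); [intros t; rewrite Rmult_1_l; unfold Rdiv; ring|].
  apply (filterlim_comp_2 (H := Rbar_locally 1) _ _ Rmult (inv_sin_at_right_0 1 Rlt_0_1)).
  - apply filterlim_within_of_derive; [auto_derive; exact I | exact cos_0].
  - apply filterlim_Rbar_mult, is_Rbar_mult_p_infty_pos. simpl. lra.
Qed.

Lemma opp_cot_at_left_PI :
  filterlim (fun t => - (cos t / sin t)) (at_left PI) (Rbar_locally p_infty).
Proof.
  apply (filterlim_ext (fun t => / (1 * sin t) * - cos t)); [intros t; rewrite Rmult_1_l; unfold Rdiv; ring|].
  apply (filterlim_comp_2 (H := Rbar_locally 1) _ _ Rmult (inv_sin_at_left_PI 1 Rlt_0_1)).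
  - apply filterlim_within_of_derive; [auto_derive; exact I | rewrite cos_PI; ring].
  - apply filterlim_Rbar_mult, is_Rbar_mult_p_infty_pos. simpl. lra.
Qed.

Lemma sig3_1_at_pinfty c : 0 < c -> filterlim (sig3_1 c) (Rbar_locally p_infty) (locally 0).
Proof.
  intros Hc.
  apply (filterlim_comp _ _ _ (fun t => c * sinh t) Rinv _ (Rbar_locally p_infty));
    [|exact (filterlim_Rbar_inv p_infty ltac:(discriminate))].
  intros P [M HP]. exists (Rmax 0 (2 * M / c)). intros t Ht. apply HP.
  assert (Hmax := Rmax_l 0 (2 * M / c)). assert (Hmax' := Rmax_r 0 (2 * M / c)).
  assert (Hsinh := sinh_ge_half t ltac:(lra)).
  assert (M < c * (t / 2)).
  { apply (Rmult_lt_reg_l (2 / c)); [apply Rdiv_lt_0_compat; lra|].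
    replace (2 / c * (c * (t / 2))) with t by (field; lra).
    replace (2 / c * M) with (2 * M / c) by (field; lra). lra. }
  nra.
Qed.

Lemma sig3_1_at_right_0 c : 0 < c -> filterlim (sig3_1 c) (at_right 0) (Rbar_locally p_infty).
Proof.
  intros Hc. apply (inv_blowup_within (fun t => c * sinh t)).
  - exists (c * cosh 0). apply is_derive_scal, is_derive_sinh.
  - rewrite sinh_0. ring.
  - unfold within. apply filter_forall. intros t Ht.
    apply Rmult_lt_0_compat; [exact Hc | apply sinh_pos, Ht].
Qed.

Lemma sig4_2_at_right_0 c e be :
  0 < c -> (e = 1 \/ e = -1) ->
  filterlim (sig4_2 c e be) (at_right 0) (Rbar_locally (if Rlt_dec 0 e then p_infty else m_infty)).
Proof. intros Hc He. exact (filterlim_affine_pinfty _ _ c e be cot_at_right_0 Hc He). Qed.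

Lemma sig4_2_at_left_PI c e be :
  0 < c -> (e = 1 \/ e = -1) ->
  filterlim (sig4_2 c e be) (at_left PI) (Rbar_locally (if Rlt_dec 0 e then m_infty else p_infty)).
Proof.
  intros Hc He. rewrite <- (if_sign_opp e He).
  apply (filterlim_ext (fun t => - e * - (cos t / sin t) / c + be)); [intros t; unfold sig4_2, Rdiv; ring|].
  apply (filterlim_affine_pinfty _ _ c (- e) be opp_cot_at_left_PI Hc).
  destruct He as [-> | ->]; [right | left]; ring.
Qed.

Lemma len_density_unit x1 x2 t s :
  (s = 1 \/ s = -1) -> gnorm x1 x2 t = s -> len_density x1 x2 t = s.
Proof.
  intros Hs Hg. unfold len_density, sgn. rewrite Hg.
  destruct Hs as [-> | ->].
  - rewrite Rabs_R1, sqrt_1. destruct (Rlt_dec 0 1); [ring | lra].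
  - rewrite Rabs_left by lra. replace (- -1) with 1 by ring. rewrite sqrt_1.
    destruct (Rlt_dec 0 (-1)); [lra|]. destruct (Rlt_dec (-1) 0); [ring | lra].
Qed.

#[local] Instance Rbar_at_right_filter a : Filter (Rbar_at_right a).
Proof. destruct a; simpl; typeclasses eauto. Qed.

#[local] Instance Rbar_at_left_filter b : Filter (Rbar_at_left b).
Proof. destruct b; simpl; typeclasses eauto. Qed.

Lemma total_length_const_density a b x1 x2 k t0 (L1 L2 L : Rbar) :
  in_dom a b t0 -> (forall t, in_dom a b t -> len_density x1 x2 t = k) ->
  filterlim (fun s => (t0 - s) * k) (Rbar_at_right a) (Rbar_locally L1) ->
  filterlim (fun s => (s - t0) * k) (Rbar_at_left b) (Rbar_locally L2) ->
  is_Rbar_plus L1 L2 L -> total_length a b x1 x2 L.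
Proof.
  intros Ht0 Hk Hleft Hright HL. assert (Hab : Rbar_lt a b) by (apply Rbar_lt_trans with t0; apply Ht0).
  exists t0. split; [exact Ht0|]. exists L1, L2. split; [|split; [|exact HL]].
  - apply (filterlim_ext_loc (fun s => (t0 - s) * k)); [|exact Hleft].
    apply (filter_imp (in_dom a b)); [|exact (in_dom_at_right a b Hab)].
    intros s Hs. symmetry. exact (RInt_const_on a b _ k s t0 Hs Ht0 Hk).
  - apply (filterlim_ext_loc (fun s => (s - t0) * k)); [|exact Hright].
    apply (filter_imp (in_dom a b)); [|exact (in_dom_at_left a b Hab)].
    intros s Hs. symmetry. exact (RInt_const_on a b _ k t0 s Ht0 Hs Hk).
Qed.

Lemma sig1_properties al :
  geodesic m_infty p_infty sig1_1 (sig1_2 al) /\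
  complete_left m_infty p_infty sig1_1 (sig1_2 al) /\
  complete_right m_infty p_infty sig1_1 (sig1_2 al).
Proof.
  assert (Hgeo := harmonic_form_geodesic _ _ _ _ _ _ _ _ (sig1_harmonic_form al)).
  split; [exact Hgeo | split; [apply complete_left_minfty | apply complete_right_pinfty]; exact Hgeo].
Qed.

Lemma sig2_properties al e :
  (e = 1 \/ e = -1) ->
  geodesic 0 p_infty sig2_1 (sig2_2 e al) /\
  ~ complete_left 0 p_infty sig2_1 (sig2_2 e al) /\
  complete_right 0 p_infty sig2_1 (sig2_2 e al).
Proof.
  intros He. assert (Hgeo := harmonic_form_geodesic _ _ _ _ _ _ _ _ (sig2_harmonic_form e al He)).
  split; [exact Hgeo | split; [|apply complete_right_pinfty, Hgeo]].
  exact (not_complete_left 0 p_infty _ _ I filterlim_Rinv_0_right).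
Qed.

Lemma sig3_properties c be e :
  0 < c -> (e = 1 \/ e = -1) ->
  geodesic 0 p_infty (sig3_1 c) (sig3_2 c e be) /\
  filterlim (sig3_1 c) (Rbar_locally p_infty) (locally 0) /\
  filterlim (sig3_1 c) (at_right 0) (Rbar_locally p_infty) /\
  ~ complete_left 0 p_infty (sig3_1 c) (sig3_2 c e be) /\
  complete_right 0 p_infty (sig3_1 c) (sig3_2 c e be) /\
  total_length 0 p_infty (sig3_1 c) (sig3_2 c e be) m_infty.
Proof.
  intros Hc He. assert (Hform := sig3_harmonic_form c e be Hc He).
  assert (Hgeo := harmonic_form_geodesic _ _ _ _ _ _ _ _ Hform).
  split; [exact Hgeo | split; [apply sig3_1_at_pinfty, Hc | split; [apply sig3_1_at_right_0, Hc|]]].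
  split; [exact (not_complete_left 0 p_infty _ _ I (sig3_1_at_right_0 c Hc))|].
  split; [apply complete_right_pinfty, Hgeo|].
  apply (total_length_const_density 0 p_infty _ _ (-1) 1 (-1) m_infty m_infty).
  - split; [simpl; lra | exact I].
  - intros t Ht. apply len_density_unit; [right; reflexivity|].
    exact (harmonic_form_gnorm _ _ _ _ _ _ _ _ Hform t Ht).
  - apply filterlim_within_of_derive; [auto_derive; exact I | ring].
  - intros P [M HP]. exists (1 - M). intros s Hs. apply HP. lra.
  - reflexivity.
Qed.

Lemma sig4_properties c be e :
  0 < c -> (e = 1 \/ e = -1) ->
  geodesic 0 PI (sig4_1 c) (sig4_2 c e be) /\
  filterlim (sig4_1 c) (at_right 0) (Rbar_locally p_infty) /\
  filterlim (sig4_2 c e be) (at_right 0)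
    (Rbar_locally (if Rlt_dec 0 e then p_infty else m_infty)) /\
  filterlim (sig4_1 c) (at_left PI) (Rbar_locally p_infty) /\
  filterlim (sig4_2 c e be) (at_left PI)
    (Rbar_locally (if Rlt_dec 0 e then m_infty else p_infty)) /\
  ~ complete_left 0 PI (sig4_1 c) (sig4_2 c e be) /\
  ~ complete_right 0 PI (sig4_1 c) (sig4_2 c e be) /\
  total_length 0 PI (sig4_1 c) (sig4_2 c e be) (Finite PI).
Proof.
  intros Hc He. assert (Hform := sig4_harmonic_form c e be Hc He).
  assert (HPI := PI_RGT_0).
  split; [exact (harmonic_form_geodesic _ _ _ _ _ _ _ _ Hform)|].
  split; [exact (inv_sin_at_right_0 c Hc)|].
  split; [exact (sig4_2_at_right_0 c e be Hc He)|].
  split; [exact (inv_sin_at_left_PI c Hc)|].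
  split; [exact (sig4_2_at_left_PI c e be Hc He)|].
  split; [exact (not_complete_left 0 PI _ _ HPI (inv_sin_at_right_0 c Hc))|].
  split; [exact (not_complete_right 0 PI _ _ HPI (inv_sin_at_left_PI c Hc))|].
  apply (total_length_const_density 0 PI _ _ 1 (PI / 2) (PI / 2) (PI / 2) PI).
  - split; simpl; lra.
  - intros t Ht. apply len_density_unit; [left; reflexivity|].
    exact (harmonic_form_gnorm _ _ _ _ _ _ _ _ Hform t Ht).
  - apply filterlim_within_of_derive; [auto_derive; exact I | ring].
  - apply filterlim_within_of_derive; [auto_derive; exact I | field].
  - unfold is_Rbar_plus. simpl. do 2 f_equal. field.
Qed.

Lemma sig2_hyperbola al e :
  (e = 1 \/ e = -1) ->
  exists beta, forall t, 0 < t -> sig2_1 t ^ 2 - 0 = (sig2_2 e al t + beta) ^ 2.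
Proof.
  intros He.
  destruct (harmonic_form_hyperbola _ _ _ _ _ _ _ _ (sig2_harmonic_form e al He) 1)
    as [beta Hbeta]; [split; [simpl; lra | exact I] | destruct He; lra |].
  exists beta. intros t Ht. rewrite <- (Hbeta t (conj Ht I)). unfold Rdiv. ring.
Qed.

Lemma sig3_hyperbola c be e :
  0 < c -> (e = 1 \/ e = -1) ->
  exists beta, forall t, 0 < t -> sig3_1 c t ^ 2 - (-1) / c ^ 2 = (sig3_2 c e be t + beta) ^ 2.
Proof.
  intros Hc He.
  destruct (harmonic_form_hyperbola _ _ _ _ _ _ _ _ (sig3_harmonic_form c e be Hc He) 1)
    as [beta Hbeta]; [split; [simpl; lra | exact I] | destruct He; subst; lra |].
  exists beta. intros t Ht. rewrite <- (Hbeta t (conj Ht I)), sign_mul_pow2 by exact He. reflexivity.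
Qed.

Lemma sig4_hyperbola c be e :
  0 < c -> (e = 1 \/ e = -1) ->
  exists beta, forall t, 0 < t < PI -> sig4_1 c t ^ 2 - 1 / c ^ 2 = (sig4_2 c e be t + beta) ^ 2.
Proof.
  intros Hc He.
  destruct (harmonic_form_hyperbola _ _ _ _ _ _ _ _ (sig4_harmonic_form c e be Hc He) (PI / 2))
    as [beta Hbeta]; [assert (HPI := PI_RGT_0); split; simpl; lra | destruct He; subst; lra |].
  exists beta. intros t Ht. rewrite <- (Hbeta t Ht), sign_mul_pow2 by exact He. reflexivity.
Qed.

Theorem theorem4p1 :
  (* classification: every non-constant geodesic is, up to affine
     reparametrization, one of the forms (1)-(4) *)
  (forall (a b : Rbar) (x1 x2 : R -> R),
     geodesic a b x1 x2 -> nonconstant a b x1 x2 ->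
     (exists al, reparam_of a b x1 x2 m_infty p_infty sig1_1 (sig1_2 al)) \/
     (exists al e, (e = 1 \/ e = -1) /\
        reparam_of a b x1 x2 0 p_infty sig2_1 (sig2_2 e al)) \/
     (exists c be e, 0 < c /\ (e = 1 \/ e = -1) /\
        reparam_of a b x1 x2 0 p_infty (sig3_1 c) (sig3_2 c e be)) \/
     (exists c be e, 0 < c /\ (e = 1 \/ e = -1) /\
        reparam_of a b x1 x2 0 PI (sig4_1 c) (sig4_2 c e be))) /\
  (* (1) *)
  (forall al,
     geodesic m_infty p_infty sig1_1 (sig1_2 al) /\
     complete_left m_infty p_infty sig1_1 (sig1_2 al) /\
     complete_right m_infty p_infty sig1_1 (sig1_2 al)) /\
  (* (2) *)
  (forall al e, (e = 1 \/ e = -1) ->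
     geodesic 0 p_infty sig2_1 (sig2_2 e al) /\
     ~ complete_left 0 p_infty sig2_1 (sig2_2 e al) /\
     complete_right 0 p_infty sig2_1 (sig2_2 e al)) /\
  (* (3) *)
  (forall c be e, 0 < c -> (e = 1 \/ e = -1) ->
     geodesic 0 p_infty (sig3_1 c) (sig3_2 c e be) /\
     filterlim (sig3_1 c) (Rbar_locally p_infty) (locally 0) /\
     filterlim (sig3_1 c) (at_right 0) (Rbar_locally p_infty) /\
     ~ complete_left 0 p_infty (sig3_1 c) (sig3_2 c e be) /\
     complete_right 0 p_infty (sig3_1 c) (sig3_2 c e be) /\
     total_length 0 p_infty (sig3_1 c) (sig3_2 c e be) m_infty) /\
  (* (4) *)
  (forall c be e, 0 < c -> (e = 1 \/ e = -1) ->
     geodesic 0 PI (sig4_1 c) (sig4_2 c e be) /\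
     filterlim (sig4_1 c) (at_right 0) (Rbar_locally p_infty) /\
     filterlim (sig4_2 c e be) (at_right 0)
       (Rbar_locally (if Rlt_dec 0 e then p_infty else m_infty)) /\
     filterlim (sig4_1 c) (at_left PI) (Rbar_locally p_infty) /\
     filterlim (sig4_2 c e be) (at_left PI)
       (Rbar_locally (if Rlt_dec 0 e then m_infty else p_infty)) /\
     ~ complete_left 0 PI (sig4_1 c) (sig4_2 c e be) /\
     ~ complete_right 0 PI (sig4_1 c) (sig4_2 c e be) /\
     total_length 0 PI (sig4_1 c) (sig4_2 c e be) (Finite PI)) /\
  (* (5) hyperbola equations (x1)^2 - lambda/c^2 = (x2 + beta)^2 *)
  (forall c be e, 0 < c -> (e = 1 \/ e = -1) -> exists beta,
     forall t, 0 < t ->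
       (sig3_1 c t) ^ 2 - (-1) / c ^ 2 = (sig3_2 c e be t + beta) ^ 2) /\
  (forall c be e, 0 < c -> (e = 1 \/ e = -1) -> exists beta,
     forall t, 0 < t < PI ->
       (sig4_1 c t) ^ 2 - 1 / c ^ 2 = (sig4_2 c e be t + beta) ^ 2) /\
  (forall al e, (e = 1 \/ e = -1) -> exists beta,
     forall t, 0 < t ->
       (sig2_1 t) ^ 2 - 0 = (sig2_2 e al t + beta) ^ 2).
Proof.
  split; [exact geodesic_classification|].
  split; [exact sig1_properties|].
  split; [exact sig2_properties|].
  split; [exact sig3_properties|].
  split; [exact sig4_properties|].
  split; [exact sig3_hyperbola|].
  split; [exact sig4_hyperbola|].
  exact sig2_hyperbola.
Qed.
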